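(* Let $I=[0,1]$ and $I'=[0',1']$ be two copies of the unit interval, and let $f\colon I\sqcup I'\to I$ be any continuous map with $f(0)=f(0')=0$ and $f(1)=f(1')=1$. Then $(0,0')$ and $(1,1')$ belong to the same connected component of $\Sigma_f$.
   Context: $\Sigma_f=\{(x,y)\in (I\sqcup I')^2: x\ne y,\ f(x)=f(y)\}$. *)

From HB Require Import structures.
From mathcomp Require Import all_boot all_order all_algebra.
From mathcomp Require Import all_classical all_reals all_analysis.
Set Implicit Arguments. Unset Strict Implicit. Unset Printing Implicit Defensive.
Import Order.TTheory GRing.Theory Num.Theory.
Import numFieldNormedType.Exports.
Local Open Scope classical_set_scope.
Local Open Scope ring_scope.

(* The disjoint union I ⊔ I' of two copies of [0,1] is modelled as the
   subspace [set p | p.2 \in [0,1]] of bool * R (bool discrete, product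
   topology): (false, x) is x ∈ I and (true, x) is x' ∈ I'. *)
Definition IU (R : realType) : set (bool * R) :=
  [set p | p.2 \in `[0, 1]%R].

Definition Sigma (R : realType) (f : bool * R -> R) : set ((bool * R) * (bool * R)) :=
  [set p | @IU R p.1 /\ @IU R p.2 /\ p.1 <> p.2 /\ f p.1 = f p.2].

(* Let g, h be the restrictions of f to I and I' and K = {(s, t) in [0,1]^2 | g s = h t}.
   The map (s, t) |-> (s, t') embeds K continuously into Sigma_f, so it suffices that
   (0, 0) and (1, 1) lie in one connected component of the compact set K.  In a compact
   metric space this follows once the two points are joined by an e-chain in K for every
   e > 0: otherwise the set of points reachable by e-chains for all e splits into two
   closed pieces at positive distance, and a cluster point of the points where chains
   leave a neighbourhood of the first piece lies in neither.  The chains come from a grid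
   of mesh 1/N: label the grid point (i/N, j/N) by the sign of g(i/N) - h(j/N), and let
   two cells be adjacent when their common side has endpoints of different labels, so
   that the side meets K by the intermediate value theorem.  Around a cell the label
   changes an even number of times; with the boundary labels this leaves exactly the two
   corner cells with an odd number of crossings, and a parity (handshake) argument joins
   them. *)

From HB Require Import structures.
From mathcomp Require Import all_boot all_order all_algebra.
From mathcomp Require Import all_classical all_reals all_analysis.
From mathcomp Require Import zify ring lra.
Import Order.TTheory GRing.Theory Num.Theory.
Import numFieldNormedType.Exports.
Set Implicit Arguments. Unset Strict Implicit. Unset Printing Implicit Defensive.

Lemma card_fixfree_involution_even (T : finType) (A : {set T}) (f : T -> T) :
  (forall x, x \in A -> [/\ f x \in A, f (f x) = x & f x != x]) -> ~~ odd #|A|.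
Proof.
move: {2}#|A| (leqnn #|A|) => n; elim: n A => [A|n IHn A leAn fA].
  by rewrite leqn0 => /eqP ->.
have [->|[x xA]] := set_0Vmem A; first by rewrite cards0.
have [fxA ffx fxx] := fA x xA.
have fxAx : f x \in A :\ x by rewrite in_setD1 fxx.
have cardA : #|A| = (#|A :\ x :\ f x|).+2.
  by rewrite (cardsD1 x A) xA (cardsD1 (f x) (A :\ x)) fxAx !add1n.
rewrite cardA /= negbK; apply: IHn => [|y]; first by move: leAn; rewrite cardA ltnS => /ltnW.
rewrite !in_setD1 => /and3P [yfx yx yA]; have [fyA ffy fyy] := fA y yA.
split=> //; rewrite fyA andbT; apply/andP; split.
  by apply: contraNneq yx => /(congr1 f); rewrite ffy ffx => ->.
by apply: contraNneq yfx => <-; rewrite ffy.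
Qed.

Section PortGraph.

Variables (V L : finType) (port : V -> pred L) (link : V * L -> V * L).
Hypothesis link_port : forall x, port x.1 x.2 -> port (link x).1 (link x).2.
Hypothesis linkK : forall x, port x.1 x.2 -> link (link x) = x.
Hypothesis link_neq : forall x, port x.1 x.2 -> link x != x.

Definition port_adj : rel V :=
  fun u v => [exists l, port u l && ((link (u, l)).1 == v)].

Lemma odd_port_connect u : odd #|port u| ->
  [exists v, [&& v != u, connect port_adj u v & odd #|port v|]].
Proof.
apply: contraTT; rewrite negb_exists => /forallP no_v.
pose S := [set v | connect port_adj u v].
pose H := [set x : V * L | (x.1 \in S) && port x.1 x.2].
have even_H : ~~ odd #|H|.
  apply: card_fixfree_involution_even (link) _ => -[v l].
  rewrite inE /= => /andP [vS pvl]; split; last exact: link_neq.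
  - rewrite inE link_port // andbT !inE; rewrite inE in vS.
    by apply: connect_trans vS (connect1 _); apply/existsP; exists l; rewrite /= pvl eqxx.
  - exact: linkK.
have card_H : #|H| = \sum_(v in S) #|port v|.
  rewrite -sum1dep_card -(pair_big_dep (mem S) port (fun _ _ => 1)) /=.
  by apply: eq_bigr => v _; rewrite sum1_card.
have even_rest : ~~ odd (\sum_(v in S | v != u) #|port v|).
  rewrite (big_morph odd oddD (id2 := 0) (erefl false)) big1 // => v.
  by rewrite inE => /andP [uv vu]; have := no_v v; rewrite vu uv => /negbTE.
by move: even_H; rewrite card_H (bigD1 u) ?inE ?connect0 //= oddD (negbTE even_rest) addbF.
Qed.

End PortGraph.

(* A cell (i, j) is the grid square with lower left corner (i, j).  A direction d
   points to the neighbour across a vertical side if d.1 and across a horizontal one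
   otherwise, towards larger indices iff d.2; that side lies on the grid line i + d.2
   (resp. j + d.2). *)
Notation cell M := ('I_M.+1 * 'I_M.+1)%type.
Notation dir := (bool * bool)%type.

Lemma card_dir (P : pred dir) :
  #|P| = P (true, true) + P (true, false) + P (false, true) + P (false, false).
Proof.
rewrite -sum1_card (eq_bigl (fun d => P (d.1, d.2))) => [|[]//].
rewrite -(pair_big_dep xpredT (fun a b => P (a, b)) (fun _ _ => 1)) /=.
rewrite big_bool /= (big_mkcond (fun j => P (true, j))) (big_mkcond (fun j => P (false, j))).
rewrite !big_bool /= addnA.
by do 4 case: (P _).
Qed.

Section CrossingGraph.

Variable M : nat.

Definition inbound (s : bool) (k : 'I_M.+1) := if s then k < M else 0 < k.

Definition step (s : bool) (k : 'I_M.+1) : 'I_M.+1 := inord (if s then k.+1 else k.-1).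

Lemma step_val s k : inbound s k -> step s k = (if s then k.+1 else k.-1) :> nat.
Proof.
rewrite /inbound /step; case: s => ?; rewrite inordK //.
by rewrite (leq_ltn_trans (leq_pred k)).
Qed.

Lemma inbound_step s k : inbound s k -> inbound (~~ s) (step s k).
Proof.
move=> sk; rewrite /inbound step_val //; case: s sk => //= k0.
by rewrite -ltnS prednK.
Qed.

Lemma stepK s k : inbound s k -> step (~~ s) (step s k) = k.
Proof.
move=> sk; apply: val_inj; rewrite /= step_val ?inbound_step // step_val //.
by case: s sk => //= k0; rewrite prednK.
Qed.

Lemma step_side s k : inbound s k -> step s k + ~~ s = k + s.
Proof. by move=> sk; rewrite step_val //; case: s sk => /= [|k0]; rewrite ?addn0 ?addn1 ?prednK. Qed.

Definition nb (c : cell M) (d : dir) : cell M :=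
  if d.1 then (step d.2 c.1, c.2) else (c.1, step d.2 c.2).

Definition has_nb (c : cell M) (d : dir) := inbound d.2 (if d.1 then c.1 else c.2).

Definition flip (d : dir) : dir := (d.1, ~~ d.2).

Lemma nbK c d : has_nb c d -> nb (nb c d) (flip d) = c.
Proof. by case: c d => i j [[] s] /= sk; rewrite /nb /= stepK. Qed.

Lemma flip_neq d : flip d != d.
Proof. by case: d => h []; rewrite /flip xpair_eqE eqxx. Qed.

Variable sg : nat -> nat -> bool.

Definition bichromatic_side (c : cell M) (d : dir) :=
  let: (i, j) := (nat_of_ord c.1, nat_of_ord c.2) in
  if d.1 then sg (i + d.2) j != sg (i + d.2) j.+1
  else sg i (j + d.2) != sg i.+1 (j + d.2).

Definition crossing (c : cell M) (d : dir) := has_nb c d && bichromatic_side c d.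

Lemma crossing_nb c d : crossing c d -> crossing (nb c d) (flip d).
Proof.
case: c d => i j [[] s] /andP [sk side];
  by rewrite /crossing /has_nb /bichromatic_side /nb /= inbound_step // step_side.
Qed.

Definition cross_link (x : cell M * dir) := (nb x.1 x.2, flip x.2).

Lemma cross_linkK x : crossing x.1 x.2 -> cross_link (cross_link x) = x.
Proof.
by case: x => c [h s] /andP [sk _]; rewrite /cross_link /= nbK // /flip negbK.
Qed.

Lemma cross_link_neq x : cross_link x != x.
Proof. by case: x => c d; rewrite /cross_link xpair_eqE (negbTE (flip_neq d)) andbF. Qed.

Definition crossing_adj : rel (cell M) := port_adj crossing cross_link.

Definition two_arc_boundary :=
  [/\ forall j, j <= M.+1 -> sg M.+1 j,
      forall i, i <= M.+1 -> sg i 0,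
      forall j, j <= M.+1 -> sg 0 j = (j == 0) &
      forall i, i <= M.+1 -> sg i M.+1 = (i == M.+1)].

Hypothesis boundary : two_arc_boundary.

Lemma odd_crossing (c : cell M) :
  odd #|crossing c| = (c == (ord0, ord0)) (+) (c == (ord_max, ord_max)).
Proof.
case: boundary => right bottom left top; case: c => [[i Hi] [j Hj]].
rewrite card_dir !oddD !oddb /crossing /has_nb /inbound /bichromatic_side /= ?addn1 ?addn0.
rewrite !xpair_eqE -!val_eqE /=.
have -> : (i < M) && (sg i.+1 j != sg i.+1 j.+1) = (sg i.+1 j != sg i.+1 j.+1).
  case: (ltnP i M) => //= iM.
  have -> : i = M by lia.
  by rewrite !right ?(ltnW Hj).
have -> : (0 < j) && (sg i j != sg i.+1 j) = (sg i j != sg i.+1 j).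
  by case: (posnP j) => //= ->; rewrite !bottom ?(ltnW Hi).
have -> : (0 < i) && (sg i j != sg i j.+1) =
          (sg i j != sg i j.+1) (+) (i == 0) && (j == 0).
  by case: (posnP i) => [->|]; rewrite ?addbF //= !left ?(ltnW Hj) //; case: (j == 0).
have -> : (j < M) && (sg i j.+1 != sg i.+1 j.+1) =
          (sg i j.+1 != sg i.+1 j.+1) (+) (i == M) && (j == M).
  case: (ltnP j M) => jM /=; first by rewrite (ltn_eqF jM) andbF addbF.
  have -> : j = M by lia.
  by rewrite !top ?(ltnW Hi) // eqSS (ltn_eqF Hi) eqxx andbT; case: (i == M).
by move: (sg i j) (sg i.+1 j) (sg i j.+1) (sg i.+1 j.+1) => [] [] [] [];
  case: (_ && _); case: (_ && _).
Qed.

Lemma crossing_connect : connect crossing_adj (ord0, ord0) (ord_max, ord_max).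
Proof.
have [->|c01] := eqVneq ((ord0, ord0) : cell M) (ord_max, ord_max); first exact: connect0.
have odd0 : odd #|crossing (ord0, ord0)|.
  by rewrite odd_crossing eqxx (negbTE c01).
have /existsP [c /and3P [cc0 conn odd_c]] := odd_port_connect (link := cross_link)
  (fun x => @crossing_nb x.1 x.2) cross_linkK (fun x _ => cross_link_neq x) odd0.
by move: odd_c; rewrite odd_crossing (negbTE cc0) => /eqP <-.
Qed.

End CrossingGraph.

Local Open Scope classical_set_scope.
Local Open Scope ring_scope.

Section Chains.
Context {R : realType} {T : pseudoMetricType R}.
Implicit Types (K P Q W : set T) (a x y z : T) (e : R).

Inductive chain K e a : T -> Prop :=
| chain_refl : chain K e a a
| chain_step x y : chain K e a x -> K y -> ball x e y -> chain K e a y.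

Lemma chain_le K e1 e2 a y : e1 <= e2 -> chain K e1 a y -> chain K e2 a y.
Proof.
move=> le12; elim=> [|x z _ IH Kz xz]; first exact: chain_refl.
by apply: chain_step IH Kz _; exact: le_ball xz.
Qed.

Lemma chain_sub K e a y : K a -> chain K e a y -> K y.
Proof. by move=> Ka; elim. Qed.

Lemma chain_exit K W e a y : W a -> chain K e a y -> ~ W y ->
  exists z x, [/\ K z, ~ W z, W x, chain K e a x & ball x e z].
Proof.
move=> Wa; elim=> [//|x z ax IH Kz xz Wz].
have [Wx|Wx] := pselect (W x); last exact: IH.
by exists z, x.
Qed.

Lemma compact_antitone_cluster K (B : R -> set T) :
  compact K -> (forall e, B e `<=` K) -> (forall e, 0 < e -> B e !=set0) ->
  (forall e1 e2, e1 <= e2 -> B e1 `<=` B e2) ->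
  exists2 z, K z & forall e d, 0 < e -> 0 < d -> exists2 w, B e w & ball z d w.
Proof.
move=> cK BK B0 Ble; pose F := filter_from [set e : R | 0 < e] B.
have FF : ProperFilter F.
  apply: filter_from_proper; last by move=> e /B0.
  apply: filter_from_filter; first by exists 1; rewrite /= ltr01.
  move=> e1 e2 e10 e20; exists (Order.min e1 e2); first by rewrite /= lt_min e10 e20.
  by rewrite subsetI; split; apply: Ble; rewrite ge_min lexx ?orbT.
have [|z [Kz clz]] := cK F FF; first by exists 1; [rewrite /= ltr01 | exact: BK].
exists z => // e d e0 d0.
have FBe : F (B e) by exists e.
have [w [Bw zw]] := clz _ _ FBe (nbhsx_ballx z _ d0).
by exists w.
Qed.

Lemma compact_closed_gap P Q : compact P -> closed Q -> P `&` Q = set0 ->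
  exists2 d, 0 < d & forall p q, P p -> Q q -> ~ ball p d q.
Proof.
move=> cP cQ PQ; apply: contrapT => no_gap.
pose B e := [set p | P p /\ exists2 q, Q q & ball p e q].
have BP e : B e `<=` P by move=> p [].
have B0 e : 0 < e -> B e !=set0.
  move=> e0; apply: contrapT => B0; apply: no_gap; exists e => // p q Pp Qq pq.
  by apply: B0; exists p; split => //; exists q.
have Ble e1 e2 : e1 <= e2 -> B e1 `<=` B e2.
  by move=> le12 p [Pp [q Qq pq]]; split => //; exists q => //; exact: le_ball pq.
have [z Pz near_z] := compact_antitone_cluster cP BP B0 Ble.
have Qz : Q z.
  apply: cQ => U /nbhs_ballP [d /= d0 dU].
  have d20 : 0 < d / 2 by rewrite divr_gt0.
  have [w [_ [q Qq wq]] zw] := near_z _ _ d20 d20.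
  exists q; split => //; apply: dU.
  by rewrite (splitr d); exact: ball_triangle zw wq.
by rewrite -subset0 in PQ; exact: (PQ z).
Qed.

Definition chain_component K a := [set y | forall e, 0 < e -> chain K e a y].

Lemma chain_component_sub K a : K a -> chain_component K a `<=` K.
Proof. by move=> Ka y /(_ 1 ltr01); exact: chain_sub. Qed.

Lemma chain_component_closed K a : closed K -> K a -> closed (chain_component K a).
Proof.
move=> clK Ka z clz.
have Kz : K z by apply: clK; apply: closureS clz; exact: chain_component_sub.
move=> e e0; have e20 : 0 < e / 2 by rewrite divr_gt0.
have [w [aw zw]] := clz _ (nbhsx_ballx z _ e20).
apply: chain_step (chain_le _ (aw _ e20)) Kz _; first lra.
by apply: le_ball (ball_sym zw); lra.
Qed.

Lemma chain_component_split K P Q a :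
  compact K -> compact P -> closed Q -> P `&` Q = set0 ->
  chain_component K a `<=` P `|` Q -> P a -> chain_component K a `&` Q = set0.
Proof.
move=> cK cP cQ PQ CPQ Pa; rewrite -subset0 => q [Cq Qq].
have [d d0 gap] := compact_closed_gap cP cQ PQ.
have d20 : 0 < d / 2 by rewrite divr_gt0.
have d40 : 0 < d / 4 by rewrite divr_gt0.
(* Every e-chain from a to q leaves the d/2-neighbourhood W of P; B e collects the
   points where it does so. *)
pose W := [set x | exists2 p, P p & ball p (d / 2) x].
have Wa : W a by exists a => //; exact: ballxx.
have Wq : ~ W q by move=> [p Pp pq]; apply: (gap p q Pp Qq); apply: le_ball pq; lra.
pose B e := [set z | exists x, [/\ K z, ~ W z, W x, chain K e a x & ball x e z]].
have BK e : B e `<=` K by move=> z [x []].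
have B0 e : 0 < e -> B e !=set0.
  by move=> e0; have [z Hz] := chain_exit Wa (Cq e e0) Wq; exists z.
have Ble e1 e2 : e1 <= e2 -> B e1 `<=` B e2.
  move=> le12 z [x [Kz Wz Wx ax xz]]; exists x; split => //.
    exact: chain_le ax.
  exact: le_ball xz.
have [z Kz near_z] := compact_antitone_cluster cK BK B0 Ble.
have Cz : chain_component K a z.
  move=> e e0; have e20 : 0 < e / 2 by rewrite divr_gt0.
  have [w [x [Kw _ _ ax xw]] zw] := near_z _ _ e20 e20.
  apply: chain_step (chain_le _ (chain_step ax Kw xw)) Kz _; first lra.
  by apply: le_ball (ball_sym zw); lra.
case: (CPQ z Cz) => [Pz|Qz].
  by have [w [x [_ Ww _ _ _]] zw] := near_z _ _ ltr01 d20; apply: Ww; exists z.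
have [w [x [_ _ [p Pp px] _ xw]] zw] := near_z _ _ d40 d40.
apply: (gap p z Pp Qz); have -> : d = d / 2 + d / 4 + d / 4 by field.
exact: ball_triangle (ball_triangle px xw) (ball_sym zw).
Qed.

Lemma chain_component_connected K a :
  compact K -> closed K -> K a -> connected (chain_component K a).
Proof.
move=> cK clK Ka; set C := chain_component K a; apply/connectedP => E [E0 CE [sep1 sep2]].
have clC : closed C by exact: chain_component_closed.
have CEb b : C = E b `|` E (~~ b) by case: b; rewrite CE // setUC.
have sepb b : closure (E b) `&` E (~~ b) = set0.
  by case: b; rewrite // setIC.
have clE b : closed (E b).
  move=> x clx; have : C x by apply: clC; apply: closureS clx; rewrite (CEb b); exact: subsetUl.
  rewrite (CEb b) => -[//|Enx].
  by move: (sepb b); rewrite -subset0 => /(_ x (conj clx Enx)).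
have Ca : C a by move=> e _; exact: chain_refl.
have nEa b : ~ E b a.
  move=> Eba; have [q Eq] := E0 (~~ b).
  have EE : E b `&` E (~~ b) = set0.
    by rewrite -subset0 -(sepb b) => x [Ex Enx]; split => //; exact: subset_closure.
  have CE' : C `<=` E b `|` E (~~ b) by rewrite -CEb.
  have cEb : compact (E b).
    apply: subclosed_compact (clE b) cK _.
    by move=> x Ex; apply: (chain_component_sub Ka); rewrite -/C (CEb b); left.
  have := chain_component_split cK cEb (clE (~~ b)) EE CE' Eba.
  by rewrite -subset0 => /(_ q); apply; split => //; rewrite -/C (CEb b); right.
by move: Ca; rewrite CE => -[/nEa|/nEa].
Qed.

Lemma chain_connected_component K a b :
  compact K -> closed K -> K a -> (forall e, 0 < e -> chain K e a b) ->
  connected_component K a b.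
Proof.
move=> cK clK Ka ab; exists (chain_component K a) => //; split.
- by move=> e _; exact: chain_refl.
- exact: chain_component_sub.
- exact: chain_component_connected.
Qed.

End Chains.

Lemma within_continuous_comp_sub {X Y Z : topologicalType} {A : set X} {B : set Y}
    {f : X -> Y} {g : Y -> Z} :
  {homo f : x / A x >-> B x} -> {within A, continuous f} -> {within B, continuous g} ->
  {within A, continuous (g \o f)}.
Proof.
move=> fAB cf cg x; apply: continuous_comp (cg _).
exact: (@subspaceT_continuous _ _ A B (mkfun_fun fAB) cf x).
Qed.

Lemma continuous_tag {T U : topologicalType} (b : T) : continuous (fun x : U => (b, x)).
Proof.
by move=> x; apply: (@cvg_pair _ _ _ _ (nbhs b) (nbhs x)); [exact: cvg_cst | exact: cvg_id].
Qed.

Lemma continuous_tags {T U : topologicalType} (a b : T) :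
  continuous (fun p : U * U => ((a, p.1), (b, p.2))).
Proof.
move=> p; apply: (@cvg_pair _ _ _ _ (nbhs (a, p.1)) (nbhs (b, p.2))).
  apply: (@cvg_pair _ _ _ _ (nbhs a) (nbhs p.1)); first exact: cvg_cst.
  exact: (@cvg_fst _ _ (nbhs p.1) (nbhs p.2)).
apply: (@cvg_pair _ _ _ _ (nbhs b) (nbhs p.2)); first exact: cvg_cst.
exact: (@cvg_snd _ _ (nbhs p.1) (nbhs p.2)).
Qed.

Section GridPoints.
Variable R : realType.

Definition pt (N i : nat) : R := i%:R / N%:R.

Lemma pt0 N : pt N 0 = 0.
Proof. by rewrite /pt mul0r. Qed.

Lemma ptN N : (0 < N)%N -> pt N N = 1.
Proof. by move=> N0; rewrite /pt divff // pnatr_eq0 -lt0n. Qed.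

Lemma ptS N i : pt N i.+1 = pt N i + N%:R^-1.
Proof. by rewrite /pt -natr1 mulrDl mul1r. Qed.

Lemma pt_le N i : pt N i <= pt N i.+1.
Proof. by rewrite ptS lerDl invr_ge0 ler0n. Qed.

Lemma pt_bit N i (b : bool) : pt N i <= pt N (i + b) <= pt N i.+1.
Proof. by case: b; rewrite ?addn0 ?addn1 lexx pt_le. Qed.

Lemma pt_in N i : (0 < N)%N -> (i <= N)%N -> pt N i \in `[0, 1].
Proof.
move=> N0 iN; rewrite in_itv /= /pt divr_ge0 ?ler0n //=.
by rewrite ler_pdivrMr ?ltr0n // mul1r ler_nat.
Qed.

Lemma pt_segment_in N j t : (j < N)%N ->
  t \in `[pt N j, pt N j.+1] -> t \in `[0, 1].
Proof.
move=> jN; have N0 : (0 < N)%N by case: N jN.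
have := pt_in N0 (ltnW jN); have := pt_in N0 jN.
rewrite !in_itv /= => /andP [_ le1] /andP [ge0 _] /andP [t1 t2].
by rewrite (le_trans ge0 t1) (le_trans t2 le1).
Qed.

Definition cell_set M (c : cell M) : set (R * R) :=
  [set p | pt M.+1 c.1 <= p.1 <= pt M.+1 c.1.+1 /\
           pt M.+1 c.2 <= p.2 <= pt M.+1 c.2.+1].

Lemma cell_set_ball M (c : cell M) p q e :
  M.+1%:R^-1 < e -> cell_set c p -> cell_set c q -> ball p e q.
Proof.
rewrite /cell_set !ptS; move: (M.+1%:R^-1) => d.
move=> de [/andP [p1 p2] /andP [p3 p4]] [/andP [q1 q2] /andP [q3 q4]].
have near (x y : R) : x - y < e -> y - x < e -> ball x e y.
  by move=> xy yx; rewrite /ball /= ltr_norml xy andbT ltrNl opprB.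
by split; apply: near; lra.
Qed.

End GridPoints.

Lemma IVT01 (R : realType) (f : R -> R) a b v :
  {within `[0, 1], continuous f} -> 0 <= a -> a <= b -> b <= 1 ->
  (f a <= v <= f b) \/ (f b <= v <= f a) -> exists2 t, t \in `[a, b] & f t = v.
Proof.
move=> cf a0 ab b1 fv; apply: IVT => //.
  apply: continuous_subspaceW cf => x /=; rewrite !in_itv /= => /andP [ax xb].
  by rewrite (le_trans a0 ax) (le_trans xb b1).
by rewrite ge_min le_max; case: fv => /andP [-> ->]; rewrite ?orbT.
Qed.

Section Coincidence.
Variables (R : realType) (g h : R -> R).

Definition coincidence : set (R * R) :=
  [set p | p.1 \in `[0, 1] /\ p.2 \in `[0, 1] /\ g p.1 = h p.2].

Hypotheses (cg : {within `[0, 1], continuous g}) (ch : {within `[0, 1], continuous h}).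

Lemma coincidence_closed : closed coincidence.
Proof.
pose S : set (R * R) := `[0, 1] `*` `[0, 1].
have clS : closed S.
  rewrite (_ : S = fst @^-1` `[0, 1] `&` snd @^-1` `[0, 1]) //.
  apply: closedI; apply: preimage_closed.
  - move=> p _; exact: cvg_fst.
  - exact: itv_closed.
  - move=> p _; exact: cvg_snd.
  - exact: itv_closed.
have cF : {within S, continuous ((g \o fst) - (h \o snd))}.
  apply: within_continuousB.
    apply: (within_continuous_comp_sub _ _ cg) => [p []//|].
    by apply: continuous_subspaceT => p; exact: cvg_fst.
  apply: (within_continuous_comp_sub _ _ ch) => [p []//|].
  by apply: continuous_subspaceT => p; exact: cvg_snd.
have -> : coincidence = ((g \o fst) - (h \o snd)) @^-1` [set 0] `&` S.
  apply/seteqP; split => [p [p1 [p2 gh]]|p [/= /eqP gh [p1 p2]]].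
    by split => //; rewrite /preimage /= !fctE /= gh subrr.
  by split => //; split => //; apply/eqP; rewrite -subr_eq0 gh.
by rewrite closed_setIS //; exact: (continuous_closedP _).1 cF _ (@closed_eq R 0).
Qed.

Lemma coincidence_compact : compact coincidence.
Proof.
apply: (subclosed_compact coincidence_closed
  (compact_setX (@segment_compact R 0 1) (@segment_compact R 0 1))).
by move=> p [p1 [p2 _]].
Qed.

Hypotheses (g01 : {homo g : x / x \in `[0, 1]}) (h01 : {homo h : x / x \in `[0, 1]}).
Hypotheses (g0 : g 0 = 0) (g1 : g 1 = 1) (h0 : h 0 = 0) (h1 : h 1 = 1).

(* Ties g = h count as true only on the bottom and right edges of the grid, as
   required by two_arc_boundary. *)
Definition grid_label (N i j : nat) : bool :=
  (h (pt R N j) < g (pt R N i)) ||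
  (g (pt R N i) == h (pt R N j)) && ((j == 0) || (i == N)).

Lemma grid_label_le N i j : grid_label N i j -> h (pt R N j) <= g (pt R N i).
Proof. by case/orP => [/ltW //| /andP [/eqP -> _]]. Qed.

Lemma grid_label_ge N i j : ~~ grid_label N i j -> g (pt R N i) <= h (pt R N j).
Proof. by rewrite negb_or -leNgt => /andP []. Qed.

Lemma grid_label_boundary M : two_arc_boundary M (grid_label M.+1).
Proof.
have [hle gle] : (forall j, (j <= M.+1)%N -> 0 <= h (pt R M.+1 j) <= 1) /\
                 (forall i, (i <= M.+1)%N -> 0 <= g (pt R M.+1 i) <= 1).
  by split => k kN; [have := h01 (pt_in R (ltn0Sn M) kN) | have := g01 (pt_in R (ltn0Sn M) kN)];
    rewrite in_itv.
rewrite /grid_label; split => [j jN|i iN|j jN|i iN].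
- rewrite ptN // g1 eqxx orbT andbT eq_sym orbC -le_eqVlt.
  by case/andP: (hle j jN).
- rewrite pt0 h0 eqxx andbT orbC eq_sym -le_eqVlt.
  by case/andP: (gle i iN).
- rewrite pt0 g0 ltNge; case/andP: (hle j jN) => -> _ /=.
  by case: (posnP j) => [->|jp]; rewrite ?pt0 ?h0 ?eqxx /= ?andbF.
- rewrite ptN // h1 ltNge; case/andP: (gle i iN) => _ -> /=.
  by case: (eqVneq i M.+1) => [->|iN']; rewrite ?ptN ?g1 ?eqxx ?andbF.
Qed.

Lemma vertical_root N k j : (0 < N)%N -> (k <= N)%N -> (j < N)%N ->
  grid_label N k j != grid_label N k j.+1 ->
  exists2 t, t \in `[pt R N j, pt R N j.+1] & h t = g (pt R N k).
Proof.
move=> N0 kN jN side; have := pt_in R N0 (ltnW jN); have := pt_in R N0 jN.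
rewrite !in_itv /= => /andP [_ le1] /andP [ge0 _]; apply: IVT01 => //; first exact: pt_le.
move: side; case E1: (grid_label N k j); case E2: (grid_label N k j.+1) => // _.
- by left; rewrite grid_label_le ?E1 // grid_label_ge ?E2.
- by right; rewrite grid_label_le ?E2 // grid_label_ge ?E1.
Qed.

Lemma horizontal_root N i k : (0 < N)%N -> (i < N)%N -> (k <= N)%N ->
  grid_label N i k != grid_label N i.+1 k ->
  exists2 s, s \in `[pt R N i, pt R N i.+1] & g s = h (pt R N k).
Proof.
move=> N0 iN kN side; have := pt_in R N0 (ltnW iN); have := pt_in R N0 iN.
rewrite !in_itv /= => /andP [_ le1] /andP [ge0 _]; apply: IVT01 => //; first exact: pt_le.
move: side; case E1: (grid_label N i k); case E2: (grid_label N i.+1 k) => // _.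
- by right; rewrite grid_label_le ?E1 // grid_label_ge ?E2.
- by left; rewrite grid_label_le ?E2 // grid_label_ge ?E1.
Qed.

Lemma crossing_point M (c : cell M) d : crossing (grid_label M.+1) c d ->
  exists p, [/\ coincidence p, cell_set c p & cell_set (nb c d) p].
Proof.
have M0 := ltn0Sn M.
have bit_le (k : 'I_M.+1) (b : bool) : (k + b <= M.+1)%N.
  by case: b; rewrite ?addn0 ?addn1 // ltnW.
case: c d => i j [[] s] /andP [sk side]; rewrite /nb /=.
- have [t tj ht] := vertical_root M0 (bit_le i s) (ltn_ord j) side.
  exists (pt R M.+1 (i + s), t); split; rewrite /cell_set /=.
  + by split; [exact: pt_in | split; [exact: pt_segment_in tj | exact/esym]].
  + by rewrite pt_bit; move: tj; rewrite in_itv.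
  + by rewrite -step_side // pt_bit; move: tj; rewrite in_itv.
- have [t ti ht] := horizontal_root M0 (ltn_ord i) (bit_le j s) side.
  exists (t, pt R M.+1 (j + s)); split; rewrite /cell_set /=.
  + by split; [exact: pt_segment_in ti | split; [exact: pt_in | exact: ht]].
  + by rewrite pt_bit; move: ti; rewrite in_itv.
  + by rewrite -step_side // pt_bit; move: ti; rewrite in_itv.
Qed.

Lemma coincidence_chain e : 0 < e -> chain coincidence e (0, 0) (1, 1).
Proof.
move=> e0; pose M := Num.truncn e^-1.
have Me : M.+1%:R^-1 < e.
  by rewrite invf_plt ?posrE ?ltr0n // truncnS_gt.
have [cells walk last_cell] := connectP (crossing_connect (grid_label_boundary M)).
suff chain_cells (c : cell M) p : path (crossing_adj (grid_label M.+1)) c p ->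
    (forall z, coincidence z -> cell_set c z -> chain coincidence e (0, 0) z) ->
    forall z, coincidence z -> cell_set (last c p) z -> chain coincidence e (0, 0) z.
  apply: (chain_cells _ _ walk).
  - move=> z Kz cz; apply: chain_step (chain_refl _ _ _) Kz _.
    by apply: cell_set_ball Me _ cz; rewrite /cell_set /= -(pt0 R M.+1) lexx pt_le.
  - by rewrite /coincidence /= g1 h1 in_itv /= ler01 lexx.
  - by rewrite -last_cell /cell_set /= -(ptN R (ltn0Sn M)) lexx pt_le.
elim: p c => [|c' p IH] c //= /andP [/existsP [d /andP [cd /eqP <-]] walk'] chain_c.
apply: IH walk' _ => z Kz cz.
have [w [Kw cw cw']] := crossing_point cd.
apply: chain_step (chain_c w Kw cw) Kz _.
exact: cell_set_ball Me cw' cz.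
Qed.

End Coincidence.

Lemma connected_component_image {T U : topologicalType} (A : set T) (B : set U)
    (phi : T -> U) x y :
  continuous phi -> phi @` A `<=` B ->
  connected_component A x y -> connected_component B (phi x) (phi y).
Proof.
move=> cphi AB [C [Cx CA cC] Cy]; exists (phi @` C); last exact: imageP.
split; first exact: imageP.
  by move=> _ [z Cz <-]; apply: AB; exact: imageP (CA z Cz).
by apply: connected_continuous_connected cC _; exact: continuous_subspaceT.
Qed.

Theorem lemma1 (R : realType) (f : bool * R -> R) :
  {within @IU R, continuous f} ->
  (forall p, @IU R p -> f p \in `[0, 1]%R) ->
  f (false, 0) = 0 -> f (true, 0) = 0 ->
  f (false, 1) = 1 -> f (true, 1) = 1 ->
  connected_component (Sigma f) ((false, 0), (true, 0)) ((false, 1), (true, 1)).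
Proof.
move=> cf f_range f0 f0' f1 f1'.
pose slice b s := f (b, s).
have slice_cont b : {within `[0, 1], continuous (slice b)}.
  apply: (within_continuous_comp_sub _ _ cf) => [s //|].
  by apply: continuous_subspaceT => s; exact: continuous_tag.
have slice01 b : {homo slice b : s / s \in `[0, 1]} by move=> s; exact: (f_range (b, s)).
have [cg ch] := (slice_cont false, slice_cont true).
have K00 : coincidence (slice false) (slice true) (0, 0).
  by rewrite /coincidence /slice /= f0 f0' in_itv /= lexx ler01.
have := chain_connected_component (coincidence_compact cg ch) (coincidence_closed cg ch) K00
  (fun e e0 => coincidence_chain cg ch (slice01 false) (slice01 true) f0 f1 f0' f1' e0).
apply: (@connected_component_image _ _ _ _ (fun p => ((false, p.1), (true, p.2))))
  => [|_ [p [p1 [p2 gh]] <-]]; last by split=> //; split=> //; split.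
exact: continuous_tags.
Qed.
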